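(* Let $q$ be a prime power and $d\ge 3$. Let $\mathbb{F}_q[x,y]_d$ be the vector space of binary forms of degree $d$ over $\mathbb{F}_q$ (including $0$), and let \[ B_d=\{f\in\mathbb{F}_q[x,y]_d : f \text{ has a double root in } \mathbb{P}^1(\overline{\mathbb{F}}_q)\}, \] where by convention $0\in B_d$. Then $\#B_d=q^d+q^{d-1}-q^{d-2}$.
   Context: A binary form $f$ has a double root at a point of $\mathbb{P}^1(\overline{\mathbb{F}}_q)$ if the corresponding linear form divides $f$ at least twice over $\overline{\mathbb{F}}_q$; i.e. $B_d$ is the set of binary forms of degree $d$ which are not square-free, with $0$ regarded as not square-free. *)

From HB Require Import structures.
From mathcomp Require Import all_boot all_order all_algebra all_field.
From mathcomp Require Import mpoly.
From mathcomp Require Import boolp.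
Set Implicit Arguments. Unset Strict Implicit. Unset Printing Implicit Defensive.
Import GRing.Theory.
Local Open Scope ring_scope.

Definition binform (R : nzRingType) (d : nat) (c : {ffun 'I_d.+1 -> R})
  : {mpoly R[2]} :=
  \sum_(i < d.+1) c i *: ('X_0 ^+ i * 'X_1 ^+ (d - i)).

(* f has a double root in P^1 over some extension field L of F:
   a nonzero linear form b x - a y over L divides f at least twice in L[x,y].
   0 is regarded as having a double root (convention of the paper). *)
Definition has_double_root (F : fieldType) (d : nat) (c : {ffun 'I_d.+1 -> F})
  : Prop :=
  binform c = 0 \/
  exists (L : fieldType) (iota : {rmorphism F -> L}) (a b : L),
    (a, b) != (0, 0) /\
    exists g : {mpoly L[2]},
      map_mpoly iota (binform c) = (b *: 'X_0 - a *: 'X_1) ^+ 2 * g.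

Definition Bd (F : finFieldType) (d : nat) : {set {ffun 'I_d.+1 -> F}} :=
  [set c | `[< has_double_root c >]].

From HB Require Import structures.
From mathcomp Require Import all_boot all_order all_algebra all_field.
From mathcomp Require Import mpoly.
From mathcomp Require Import boolp zify.

(* Write a form of degree d as f(x, y) = y^d P(x/y). Then f has a double root
   exactly when deg P <= d - 2 (a double root at infinity) or P is not
   separable, and over the perfect field F_q separable means square-free.
   Every monic polynomial is uniquely a^2 b with a, b monic and b square-free,
   so q^n = sum_k q^k s(n - 2k), where s(m) counts the monic square-free
   polynomials of degree m; comparing n with n + 2 gives
   s(m) = q^m - q^(m-1) for m >= 2. The forms without a double root are the
   (q - 1)(s(d) + s(d-1)) = q^(d+1) - q^d - q^(d-1) + q^(d-2) forms with
   P square-free of degree d or d - 1, and B_d is their complement. *)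

Set Implicit Arguments. Unset Strict Implicit. Unset Printing Implicit Defensive.
Import GRing.Theory.
Local Open Scope ring_scope.

Section PcharPoly.
Variables (R : idomainType) (p : nat).
Hypothesis pcharRp : p \in [pchar R].

Lemma deriv_eq0_comp_Xn (g : {poly R}) :
  g^`() = 0 -> g = \poly_(i < size g) g`_(i * p) \Po 'X^p.
Proof.
move=> g'0; have p_gt0 := prime_gt0 (pcharf_prime pcharRp).
apply/polyP => i; rewrite coef_comp_poly_Xn // coef_poly.
have [[j ->]|pNi] := dvdnP; last first.
  case: i pNi => [|i] pNi; first by case: pNi; exists 0%N.
  have := congr1 (fun q : {poly R} => q`_i) g'0.
  rewrite coef_deriv coef0 -mulr_natr => /eqP.
  by rewrite mulf_eq0 -(dvdn_pcharf pcharRp) => /orP[/eqP //|/dvdnP].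
rewrite mulnK //; case: ltnP => // /leq_sizeP-> //.
by rewrite leq_pmulr.
Qed.

Lemma exp_pchar_poly (u : {poly R}) :
  u ^+ p = map_poly (pFrobenius_aut pcharRp) u \Po 'X^p.
Proof.
have pcharPp : p \in [pchar {poly R}] by rewrite pchar_poly.
rewrite -[u in LHS]coefK /map_poly !poly_def -(pFrobenius_autE pcharPp).
rewrite rmorph_sum -[_ \Po _]/(comp_poly _ _) raddf_sum; apply: eq_bigr => i _.
by rewrite /= !pFrobenius_autE exprZn comp_polyZ comp_Xn_poly -!exprM mulnC.
Qed.

End PcharPoly.

Section FinFieldSeparable.
Variable F : finFieldType.
Implicit Types f u : {poly F}.

Lemma finField_deriv_eq0_exp p f :
  p \in [pchar F] -> f^`() = 0 -> exists u, f = u ^+ p.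
Proof.
move=> pcharFp /(deriv_eq0_comp_Xn pcharFp) ->.
have /injF_bij[r _ rK] : injective (pFrobenius_aut pcharFp) := fmorph_inj _.
exists (\poly_(i < size f) r f`_(i * p)).
rewrite [RHS](exp_pchar_poly pcharFp); congr (_ \Po _); apply/polyP => i.
by rewrite coef_map /= !coef_poly; case: ifP; rewrite ?rK ?rmorph0.
Qed.

Lemma finField_separable_square_freeP f :
  reflect (forall u, size u != 1 -> ~~ (u ^+ 2 %| f)) (separable_poly f).
Proof.
apply: (iffP idP) => [sep_f u u1|sqf_f]; first by rewrite separable_nosquare.
apply/separable_polyP; split; first exact/poly_square_freeP.
move=> u u_f u_gt1; apply/eqP => u'0.
have [p p_pr pcharFp] := finPcharP F.
have [w def_u] := finField_deriv_eq0_exp pcharFp u'0.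
have w1 : size w != 1.
  apply: contraTneq u_gt1 => w1; rewrite -leqNgt def_u.
  by rewrite (size1_polyC (eq_leq w1)) -rmorphXn size_polyC_leq1.
have /negP[] := sqf_f w w1; apply: dvdp_trans u_f.
by rewrite def_u dvdp_exp2l // prime_gt1.
Qed.

Lemma finField_nonseparable_square_factor f :
  ~~ separable_poly f -> exists2 u : {poly F}, size u != 1 & u ^+ 2 %| f.
Proof.
move=> /finField_separable_square_freeP nsqf_f; apply: contrapT => no_u.
by apply: nsqf_f => u u1; apply/negP => u2_f; apply: no_u; exists u.
Qed.

End FinFieldSeparable.

Section SquareSeparableFactor.
Variable F : fieldType.
Implicit Types a b : {poly F}.

Lemma square_separable_dvdp a a' b b' :
  a != 0 -> separable_poly b' -> a ^+ 2 * b = a' ^+ 2 * b' -> a %| a'.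
Proof.
move=> a0 sep_b' eq_ab; set g := gcdp a a'.
have g0 : g != 0 by rewrite gcdp_eq0 negb_and a0.
have [Da Da'] : a = a %/ g * g /\ a' = a' %/ g * g.
  by rewrite !divpK ?dvdp_gcdl ?dvdp_gcdr.
have co_aa' : coprimep (a %/ g) (a' %/ g) by rewrite coprimep_div_gcd ?a0.
have eq_ab_g : (a %/ g) ^+ 2 * b = (a' %/ g) ^+ 2 * b'.
  apply: (mulIf (expf_neq0 2 g0)).
  by rewrite mulrAC -exprMn -Da eq_ab {1}Da' exprMn mulrAC.
have : (a %/ g) ^+ 2 %| b'.
  rewrite -(Gauss_dvdpr _ (coprimep_expr 2 (coprimep_expl 2 co_aa'))) -eq_ab_g.
  exact/dvdp_mulr/dvdpp.
apply: contraTT => a'Na; rewrite separable_nosquare //.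
apply: contra a'Na; rewrite size_poly_eq1 => /andP[/dvdp_mul/(_ (dvdp_gcdr a a'))].
by rewrite -Da mul1r.
Qed.

Lemma square_separable_factor_uniq a a' b b' :
    a \is monic -> a' \is monic -> separable_poly b -> separable_poly b' ->
  a ^+ 2 * b = a' ^+ 2 * b' -> a = a' /\ b = b'.
Proof.
move=> ma ma' sep_b sep_b' eq_ab.
have Da : a = a'.
  apply/eqP; rewrite -eqp_monic // /eqp.
  by rewrite !(square_separable_dvdp _ _ eq_ab, square_separable_dvdp _ _ (esym eq_ab))
             ?monic_neq0.
by split=> //; apply: (mulfI (expf_neq0 2 (monic_neq0 ma))); rewrite {2}Da.
Qed.

End SquareSeparableFactor.

Lemma finField_square_separable_factor (F : finFieldType) (f : {poly F}) :
    f \is monic ->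
  exists a b, [/\ a \is monic, b \is monic, separable_poly b & f = a ^+ 2 * b].
Proof.
have [n] := ubnP (size f); elim: n f => // n IHn f /ltnSE le_f_n mf.
have [sep_f|] := boolP (separable_poly f).
  by exists 1, f; rewrite monic1 expr1n mul1r.
case/finField_nonseparable_square_factor=> u u1 u2_f.
have u0 : u != 0.
  by apply: contraTneq u2_f => ->; rewrite expr0n dvd0p monic_neq0.
pose v := (lead_coef u)^-1 *: u.
have mv : v \is monic by rewrite monicE lead_coefZ mulVf ?lead_coef_eq0.
have mv2 : v ^+ 2 \is monic by rewrite monic_exp.
have Df : f = f %/ v ^+ 2 * v ^+ 2.
  by rewrite divpK // exprZn dvdpZl // expf_neq0 // invr_eq0 lead_coef_eq0.
have [||a [b [ma mb sep_b Df']]] := IHn (f %/ v ^+ 2).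
- rewrite size_divp ?monic_neq0 //.
  have := size_exp v 2; rewrite size_scale ?invr_eq0 ?lead_coef_eq0 //.
  have := size_poly_gt0 f; rewrite monic_neq0 //.
  move: u1 u0 le_f_n; rewrite -size_poly_eq0.
  by move: (size u) (size f) (size (v ^+ 2)); lia.
- by rewrite -(monicMr _ mv2) -Df.
exists (a * v), b; split=> //; first by rewrite monicMl.
by rewrite Df Df' exprMn mulrAC.
Qed.

Section MonicNpoly.
Variables (R : nzRingType) (n : nat).
Implicit Types r : {poly_n R}.

Definition mnpoly r : {poly R} := 'X^n + r.

Lemma size_mnpoly r : size (mnpoly r) = n.+1.
Proof. by rewrite size_polyDl size_polyXn // ltnS size_npoly. Qed.

Lemma mnpoly_monic r : mnpoly r \is monic.
Proof. by rewrite monicE lead_coefDl ?lead_coefXn // size_polyXn ltnS size_npoly. Qed.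

Lemma mnpoly_inj : injective mnpoly.
Proof. by move=> r r' /addrI /val_inj. Qed.

Lemma npolypK_monic (f : {poly R}) :
  f \is monic -> size f = n.+1 -> mnpoly (npolyp n f) = f.
Proof.
move=> /monicP f1 size_f; apply/polyP => i; rewrite coefD coefXn coef_npolyp.
case: ltngtP => [_|lt_n_i|->]; first exact: add0r.
  by rewrite add0r nth_default // size_f.
by rewrite addr0 -f1 /lead_coef size_f.
Qed.

End MonicNpoly.

Section SeparableCount.
Variable F : finFieldType.
Local Notation q := #|F|.

Definition nsep n := #|[set r : {poly_n F} | separable_poly (mnpoly r)]|.

Section SquareSeparableFibers.
Variable n : nat.

Definition sqsep_glue k (ab : {poly_k F} * {poly_(n - k.*2) F}) : {poly_n F} :=
  npolyp n (mnpoly ab.1 ^+ 2 * mnpoly ab.2).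

Definition sqsep_fiber k : {set {poly_n F}} :=
  [set @sqsep_glue k ab | ab in [set ab : {poly_k F} * {poly_(n - k.*2) F} |
                                  separable_poly (mnpoly ab.2)]].

Lemma mnpoly_sqsep_glue k ab :
  (k.*2 <= n)%N -> mnpoly (@sqsep_glue k ab) = mnpoly ab.1 ^+ 2 * mnpoly ab.2.
Proof.
move=> le_2k_n; apply: npolypK_monic.
  by rewrite monicMl ?monic_exp ?mnpoly_monic.
rewrite expr2 -mulrA !size_Mmonic ?monic_neq0 ?monicMl ?mnpoly_monic //.
by rewrite !size_mnpoly; move: le_2k_n; lia.
Qed.

Lemma card_sqsep_fiber k :
  (k.*2 <= n)%N -> #|sqsep_fiber k| = (q ^ k * nsep (n - k.*2))%N.
Proof.
move=> le_2k_n; rewrite card_in_imset => [|[a b] [a' b']]; last first.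
  rewrite !inE /= => sep_b sep_b' /(congr1 (@mnpoly _ _)).
  rewrite !mnpoly_sqsep_glue //= => eq_ab.
  have [] := square_separable_factor_uniq (mnpoly_monic _) (mnpoly_monic _)
    sep_b sep_b' eq_ab.
  by move=> /mnpoly_inj-> /mnpoly_inj->.
have -> : [set ab : {poly_k F} * {poly_(n - k.*2) F} | separable_poly (mnpoly ab.2)] =
          setX [set: {poly_k F}] [set b | separable_poly (mnpoly b)].
  by apply/setP => -[a b]; rewrite !inE.
by rewrite cardsX cardsT card_npoly.
Qed.

Lemma sqsep_fiber_disjoint k k' : (k.*2 <= n)%N -> (k'.*2 <= n)%N -> k != k' ->
  [disjoint sqsep_fiber k & sqsep_fiber k'].
Proof.
move=> le_2k_n le_2k'_n neq_kk'; rewrite -setI_eq0; apply/eqP/setP => r.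
rewrite inE in_set0; apply/andP => -[/imsetP[[a b] + ->] /imsetP[[a' b'] +]].
rewrite !inE /= => sep_b sep_b' /(congr1 (@mnpoly _ _)).
rewrite !mnpoly_sqsep_glue //= => eq_ab.
have [eq_a _] := square_separable_factor_uniq (mnpoly_monic _) (mnpoly_monic _)
  sep_b sep_b' eq_ab.
by have /eqP := size_mnpoly a; rewrite eq_a size_mnpoly eqSS eq_sym (negbTE neq_kk').
Qed.

Lemma sqsep_fiber_cover r : exists2 k, (k.*2 <= n)%N & r \in sqsep_fiber k.
Proof.
have [a [b [ma mb sep_b Dr]]] := finField_square_separable_factor (mnpoly_monic r).
set k := (size a).-1.
have size_a : size a = k.+1 by rewrite prednK // size_poly_gt0 monic_neq0.
have b_gt0 : (0 < size b)%N by rewrite size_poly_gt0 monic_neq0.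
have := size_mnpoly r; rewrite Dr expr2 -mulrA !size_Mmonic ?monicMl ?monic_neq0 //.
rewrite size_a => size_ab.
have [le_2k_n size_b] : (k.*2 <= n)%N /\ size b = (n - k.*2).+1.
  by move: b_gt0 size_ab; rewrite -addnn; set s := size b; lia.
exists k => //; apply/imsetP; exists (npolyp k a, npolyp (n - k.*2) b).
  by rewrite inE /= npolypK_monic.
by apply: mnpoly_inj; rewrite mnpoly_sqsep_glue //= !npolypK_monic.
Qed.

Lemma card_npoly_sqsep : (q ^ n = \sum_(k < n./2.+1) q ^ k * nsep (n - k.*2))%N.
Proof.
have le_2k_n (k : 'I_n./2.+1) : (k.*2 <= n)%N by rewrite -geq_half_double -ltnS.
have -> : (q ^ n)%N = #|\bigcup_(k < n./2.+1) sqsep_fiber k|.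
  rewrite -card_npoly; apply: eq_card => r; rewrite inE.
  apply/esym/bigcupP; have [k le_2k_n' r_k] := sqsep_fiber_cover r.
  have lt_k : (k < n./2.+1)%N by rewrite ltnS geq_half_double.
  by exists (Ordinal lt_k).
rewrite -sum1_card partition_disjoint_bigcup => [|i j neq_ij].
  by apply: eq_bigr => k _; rewrite sum1_card card_sqsep_fiber.
exact: sqsep_fiber_disjoint.
Qed.

End SquareSeparableFibers.

Lemma nsep_exp n : nsep n.+2 = (q ^ n.+2 - q ^ n.+1)%N.
Proof.
rewrite (card_npoly_sqsep n.+2) big_ord_recl /= expn0 mul1n subn0.
rewrite expnS (card_npoly_sqsep n) big_distrr /=.
rewrite [X in (_ + X)%N](eq_bigr (fun k : 'I_n./2.+1 =>
                                     q * (q ^ k * nsep (n - k.*2)))%N) ?addnK //.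
by move=> k _; rewrite /bump /= add1n expnS doubleS subSS mulnA.
Qed.

Lemma card_separable_size N m : (m < N)%N ->
  #|[set r : {poly_N F} | (size r == m.+1) && separable_poly r]| = (q.-1 * nsep m)%N.
Proof.
move=> lt_m_N; pose scale_mn (ca : F * {poly_m F}) := npolyp N (ca.1 *: mnpoly ca.2).
have scale_mnE ca : ca.1 != 0 -> scale_mn ca = ca.1 *: mnpoly ca.2 :> {poly F}.
  by move=> ca0; rewrite npolypK // size_scale // size_mnpoly.
have sepZ c (f : {poly F}) : c != 0 -> separable_poly (c *: f) = separable_poly f.
  by move=> c0; apply: eqp_separable; rewrite eqp_scale.
have -> : [set r : {poly_N F} | (size r == m.+1) && separable_poly r] =
          scale_mn @: setX [set~ 0] [set a | separable_poly (mnpoly a)].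
  apply/setP => r; rewrite inE; apply/andP/imsetP => [[/eqP size_r sep_r]|].
    have lr0 : lead_coef r != 0 by rewrite lead_coef_eq0 -size_poly_eq0 size_r.
    have mr : (lead_coef r)^-1 *: (r : {poly F}) \is monic.
      by rewrite monicE lead_coefZ mulVf.
    have size_mr : size ((lead_coef r)^-1 *: (r : {poly F})) = m.+1.
      by rewrite size_scale ?invr_eq0.
    exists (lead_coef r, npolyp m ((lead_coef r)^-1 *: (r : {poly F}))).
      by rewrite !inE lr0 npolypK_monic // sepZ ?invr_eq0.
    apply: val_inj => /=.
    by rewrite scale_mnE //= npolypK_monic // scalerA mulfV ?scale1r.
  move=> [[c a]]; rewrite !inE /= => /andP[c0 sep_a] ->.
  by rewrite scale_mnE // size_scale // size_mnpoly sepZ.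
rewrite card_in_imset ?cardsX ?cardsC1 ?card_npoly => [|[c a] [c' a']] //.
rewrite !inE /= => /andP[c0 _] /andP[c'0 _] /(congr1 val); rewrite /= !scale_mnE //.
move=> eq_ca; have eq_c : c = c'.
  move/(congr1 lead_coef): eq_ca.
  by rewrite !lead_coefZ !(monicP (mnpoly_monic _)) !mulr1.
rewrite -eq_c in eq_ca *; congr (_, _); apply: mnpoly_inj.
by rewrite -[LHS]scale1r -(mulVf c0) -scalerA eq_ca scalerA mulVf ?scale1r.
Qed.

End SeparableCount.

Section Homogenization.
Variable R : comNzRingType.
Implicit Types (P Q : {poly R}) (a b : R).

Definition homogenize k P : {mpoly R[2]} :=
  \sum_(i < k.+1) P`_i *: ('X_0 ^+ i * 'X_1 ^+ (k - i)).

Fact homogenize_is_linear k : linear (homogenize k).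
Proof.
move=> a P Q; rewrite /homogenize scaler_sumr -big_split /=; apply: eq_bigr => i _.
by rewrite coefD coefZ scalerDl scalerA.
Qed.

HB.instance Definition _ k := GRing.isLinear.Build R {poly R} {mpoly R[2]} _
  (homogenize k) (homogenize_is_linear k).

Lemma homogenize_mulX k P : homogenize k.+1 (P * 'X) = homogenize k P * 'X_0.
Proof.
rewrite /homogenize big_ord_recl coefMX /= scale0r add0r mulr_suml.
apply: eq_bigr => i _; rewrite coefMX /= subSS -scalerAl.
by congr (_ *: _); rewrite exprSr mulrAC.
Qed.

Lemma homogenize_mulX1 k P :
  (size P <= k.+1)%N -> homogenize k.+1 P = homogenize k P * 'X_1.
Proof.
move=> size_P; rewrite /homogenize big_ord_recr /= nth_default // scale0r addr0 mulr_suml.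
apply: eq_bigr => i _; rewrite -scalerAl -mulrA -exprSr subSn //.
by rewrite -ltnS.
Qed.

Lemma homogenize_mulXsubC k P a : (size P <= k.+1)%N ->
  homogenize k.+1 (P * ('X - a%:P)) = homogenize k P * ('X_0 - a *: 'X_1).
Proof.
move=> size_P; rewrite mulrBr linearB /= homogenize_mulX [P * _]mulrC mul_polyC.
by rewrite linearZ /= homogenize_mulX1 // mulrBr scalerAr.
Qed.

Definition dehomog (u v : {poly R}) : {mpoly R[2]} -> {poly R} :=
  mmap (@polyC R) (fun i : 'I_2 => if i == 0 then u else v).

HB.instance Definition _ u v := GRing.RMorphism.copy (dehomog u v) (dehomog u v).

Lemma dehomog_linear_form u v a b :
  dehomog u v (b *: 'X_0 - a *: 'X_1) = b%:P * u - a%:P * v.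
Proof. by rewrite /dehomog rmorphB /= !mmapZ !mmapX !mmap1U. Qed.

Lemma dehomog_homogenize u v k P :
  dehomog u v (homogenize k P) =
  \sum_(i < k.+1) (P`_i)%:P * (u ^+ i * v ^+ (k - i)).
Proof.
rewrite /dehomog /homogenize raddf_sum; apply: eq_bigr => i _.
by rewrite /= mmapZ rmorphM !rmorphXn /= !mmapX !mmap1U.
Qed.

Lemma dehomog_homogenize_X1 k P :
  (size P <= k.+1)%N -> dehomog 'X 1 (homogenize k P) = P.
Proof.
move=> size_P; rewrite dehomog_homogenize.
under eq_bigr do rewrite expr1n mulr1 mul_polyC.
rewrite -poly_def; apply/polyP => i; rewrite coef_poly.
by case: ltnP => // /(leq_trans size_P)/leq_sizeP->.
Qed.

Lemma dehomog_homogenize_1X k P :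
  dehomog 1 'X (homogenize k P) = \poly_(i < k.+1) P`_(k - i).
Proof.
rewrite dehomog_homogenize poly_def (reindex_inj rev_ord_inj) /=.
apply: eq_bigr => i _; rewrite expr1n mul1r mul_polyC subSS subKn //.
by rewrite -ltnS.
Qed.

End Homogenization.

Lemma map_homogenize (R S : comNzRingType) (f : {rmorphism R -> S}) k
    (P : {poly R}) :
  map_mpoly f (homogenize k P) = homogenize k (map_poly f P).
Proof.
rewrite /homogenize raddf_sum; apply: eq_bigr => i _.
by rewrite /= map_mpolyZ rmorphM !rmorphXn /= !map_mpolyX coef_map.
Qed.

Definition coefs_poly (R : nzRingType) n (c : {ffun 'I_n.+1 -> R}) : {poly R} :=
  \poly_(i < n.+1) c (inord i).

Lemma coef_coefs_poly (R : nzRingType) n (c : {ffun 'I_n.+1 -> R}) (i : 'I_n.+1) :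
  (coefs_poly c)`_i = c i.
Proof. by rewrite coef_poly ltn_ord inord_val. Qed.

Lemma binform_homogenize (R : comNzRingType) d (c : {ffun 'I_d.+1 -> R}) :
  binform c = homogenize d (coefs_poly c).
Proof. by apply: eq_bigr => i _; rewrite coef_coefs_poly. Qed.

Lemma closed_nonseparable_double_root (L : closedFieldType) (Q : {poly L}) :
  ~~ separable_poly Q -> exists a R, Q = R * ('X - a%:P) ^+ 2.
Proof.
rewrite separable_poly.unlock => /closed_rootP[a]; rewrite root_gcd.
case/andP=> /factor_theorem[Q1 ->]; rewrite derivM derivXsubC mulr1 rootE.
rewrite hornerD hornerM hornerXsubC subrr mulr0 add0r -rootE.
by case/factor_theorem=> R ->; exists a, R; rewrite -mulrA.
Qed.

Section DoubleRoot.
Variables (F : fieldType) (k : nat) (c : {ffun 'I_k.+3 -> F}).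
Local Notation P := (coefs_poly c).

Lemma has_double_root_degenerate :
  has_double_root c -> (size P <= k.+1)%N || ~~ separable_poly P.
Proof.
have size_P : (size P <= k.+3)%N := size_poly _ _.
case=> [c0 | [L [iota [a [b [ab0 [g Dform]]]]]]].
  suff -> : P = 0 by rewrite size_poly0.
  by rewrite -(dehomog_homogenize_X1 size_P) -binform_homogenize c0 /dehomog rmorph0.
rewrite binform_homogenize map_homogenize in Dform.
have size_Pi : size (map_poly iota P) = size P := size_map_poly _ _.
have [b0|b0] := eqVneq b 0.
  (* y^2 divides the form: the top two coefficients of P vanish. *)
  apply/orP; left; rewrite -size_Pi.
  move/(congr1 (dehomog 1 'X)): Dform.
  rewrite dehomog_homogenize_1X rmorphM rmorphXn /= dehomog_linear_form b0.
  rewrite mul0r sub0r sqrrN exprMn mulrAC => Dpoly.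
  have Pi_top j : (j < 2)%N -> (map_poly iota P)`_(k.+2 - j) = 0.
    move=> lt_j2; have := congr1 (fun p : {poly L} => p`_j) Dpoly.
    by rewrite coefMXn lt_j2 coef_poly ltnS (leq_trans (ltnW lt_j2)).
  apply/leq_sizeP => j; rewrite leq_eqVlt => /predU1P[<-|].
    exact: (Pi_top 1%N).
  rewrite leq_eqVlt => /predU1P[<-|]; first exact: (Pi_top 0%N).
  by move=> lt_k2_j; rewrite nth_default // size_Pi (leq_trans size_P).
apply/orP; right; rewrite -(separable_map iota); apply/negP => sep_Pi.
move/(congr1 (dehomog 'X 1)): Dform.
rewrite dehomog_homogenize_X1 ?size_Pi // rmorphM rmorphXn /= dehomog_linear_form mulr1.
move=> DPi; have : (b%:P * 'X - a%:P) ^+ 2 %| map_poly iota P.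
  by rewrite DPi dvdp_mulr.
by rewrite separable_nosquare // -polyCN size_MXaddC size_polyC polyC_eq0 (negbTE b0).
Qed.

End DoubleRoot.

Lemma degenerate_has_double_root (F : countFieldType) k (c : {ffun 'I_k.+3 -> F}) :
  (size (coefs_poly c) <= k.+1)%N || ~~ separable_poly (coefs_poly c) ->
  has_double_root c.
Proof.
have [L [iota _]] := countable_algebraic_closure F.
move=> degenerate; right; exists L, iota.
rewrite binform_homogenize map_homogenize.
set Pi := map_poly iota _.
have size_Pi : size Pi = size (coefs_poly c) := size_map_poly _ _.
case/orP: degenerate => [small_P|].
  exists 1, 0; split; first by rewrite xpair_eqE oner_eq0.
  exists (homogenize k Pi).
  rewrite !homogenize_mulX1 ?size_Pi ?(leq_trans small_P) //.
  by rewrite scale0r sub0r scale1r sqrrN expr2 [RHS]mulrC mulrA.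
rewrite -(separable_map iota) -/Pi => /closed_nonseparable_double_root[a [Q DPi]].
exists a, 1; split; first by rewrite xpair_eqE oner_eq0 andbF.
have [Q0|Q0] := eqVneq Q 0; first by exists 0; rewrite DPi Q0 mul0r mulr0 raddf0.
have size_MXsubC (R : {poly L}) : R != 0 -> size (R * ('X - a%:P)) = (size R).+1.
  by move=> R0; rewrite size_Mmonic ?monicXsubC // size_XsubC addn2.
have size_Q : (size Q <= k.+1)%N.
  rewrite -2!ltnS -size_MXsubC // -size_MXsubC ?mulf_neq0 ?polyXsubC_eq0 //.
  by rewrite -mulrA -expr2 -DPi size_Pi size_poly.
exists (homogenize k Q).
rewrite DPi expr2 mulrA !homogenize_mulXsubC ?size_MXsubC // scale1r.
by rewrite [RHS]mulrC mulrA.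
Qed.

Lemma card_coefs_poly (R : finNzRingType) n (Pr : pred {poly R}) :
  #|[set c : {ffun 'I_n.+1 -> R} | Pr (coefs_poly c)]| =
  #|[set r : {poly_n.+1 R} | Pr r]|.
Proof.
pose f (r : {poly_n.+1 R}) := [ffun i : 'I_n.+1 => r`_i].
pose g (c : {ffun 'I_n.+1 -> R}) : {poly_n.+1 R} := npolyp n.+1 (coefs_poly c).
have gE c : g c = coefs_poly c :> {poly R} by rewrite npolypK // size_poly.
have fK : cancel f g.
  move=> r; apply/npolyP => i; rewrite gE coef_poly.
  by case: ltnP => [lt_i|le_i]; rewrite ?ffunE ?inordK // big_coef_npoly.
have gK : cancel g f by move=> c; apply/ffunP => i; rewrite ffunE gE coef_coefs_poly.
rewrite -(card_imset _ (can_inj fK)) (can2_imset_pre _ fK gK).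
by apply: eq_card => c; rewrite !inE gE.
Qed.

Lemma card_separable_size_ge (F : finFieldType) m :
  #|[set r : {poly_m.+2 F} | (m.+1 <= size r)%N && separable_poly r]| =
  (#|F|.-1 * (nsep F m.+1 + nsep F m))%N.
Proof.
rewrite mulnDr -(@card_separable_size F m.+2 m.+1) //.
rewrite -(@card_separable_size F m.+2 m) //.
rewrite -(cardsID [set r : {poly_m.+2 F} | size r == m.+2]).
congr (_ + _)%N; apply: eq_card => r; rewrite !inE; have := size_npoly r;
  by case: (separable_poly r); rewrite ?andbT ?andbF //; set s := size r; lia.
Qed.

Local Close Scope ring_scope.
Unset Implicit Arguments. Set Strict Implicit.

Theorem lemma4p1 (F : finFieldType) (d : nat) (hd : 3 <= d) :
  #|Bd F d| = (#|F| ^ d + #|F| ^ d.-1 - #|F| ^ d.-2)%N.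
Proof.
case: d hd => [|[|[|k]]] // _ /=.
pose nondegenerate (P : {poly F}) := (k.+3 <= size P) && separable_poly P.
have -> : Bd F k.+3 = ~: [set c | nondegenerate (coefs_poly c)].
  apply/setP => c; rewrite !inE negb_and -ltnNge ltnS; apply/asboolP/idP.
    exact: has_double_root_degenerate.
  exact: degenerate_has_double_root.
rewrite cardsCs setCK card_ffun card_ord card_coefs_poly card_separable_size_ge.
rewrite !nsep_exp; have := finNzRing_gt1 F; move: #|F| => q q_gt1.
by rewrite !expnS; move: (q ^ k); nia.
Qed.
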